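(* Let $f:M^2\to\mathbb{R}^3$ be a surface in curvature line coordinates $(x,y)$ with metric $H_1^2dx^2+H_2^2dy^2$ and nonvanishing principal curvatures $\kappa_1,\kappa_2$, let $\varepsilon\in\{0,\pm1\}$, and let $\hat f$ be an associated surface given by $d\hat f=h\,\partial_xf\,dx+l\,\partial_yf\,dy$ with $(h-l)^2=\frac{1}{H_1^2}+\frac{\varepsilon}{H_2^2}$. Let $f^\star$ be the corresponding dual surface, $df^\star=\big(-h^2+\frac1{H_1^2}\big)\partial_xf\,dx+\big(-l^2+\frac{\varepsilon}{H_2^2}\big)\partial_yf\,dy$. Then, with principal curvatures of $\hat f,f^\star$ taken with respect to the normal of $f$, i.e. $\frac1{\hat\kappa_1}=\frac h{\kappa_1}$, $\frac1{\hat\kappa_2}=\frac l{\kappa_2}$, $\frac1{\kappa_1^\star}=\frac{-h^2+1/H_1^2}{\kappa_1}$, $\frac1{\kappa_2^\star}=\frac{-l^2+\varepsilon/H_2^2}{\kappa_2}$, $$\Big(\frac1{\kappa_1}-\frac1{\kappa_2}\Big)\Big(\frac1{\kappa_1^\star}-\frac1{\kappa_2^\star}\Big)=\frac{1}{\kappa_1^2H_1^2}+\frac{\varepsilon}{\kappa_2^2H_2^2}-\Big(\frac1{\hat\kappa_1}-\frac1{\hat\kappa_2}\Big)^2 .$$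
   Context: Surfaces are parametrized by curvature line coordinates (orthogonal, conjugate); $\kappa_1,\kappa_2$ are the principal curvatures along $x$- and $y$-lines. A Combescure transform $\hat f$ of $f$ is a surface with $d\hat f=h\,\partial_xf\,dx+l\,\partial_yf\,dy$; its principal curvatures in the corresponding directions are $\kappa_1/h$ and $\kappa_2/l$ (up to the common sign given by normal orientation). $f$ is a G-surface with associated surface $\hat f$ if $cH_1^2H_2^2(\kappa_1/\hat\kappa_1-\kappa_2/\hat\kappa_2)^2=H_2^2+\varepsilon H_1^2$ for some $c\ne0$, $\varepsilon\in\{0,\pm1\}$; the hypothesis $(h-l)^2=1/H_1^2+\varepsilon/H_2^2$ is this condition with $c=1$. The 1-form defining $f^\star$ is closed under this hypothesis. *)

From mathcomp Require Import all_boot all_order all_algebra.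
Set Implicit Arguments. Unset Strict Implicit. Unset Printing Implicit Defensive.
Import Order.TTheory GRing.Theory Num.Theory.
Local Open Scope ring_scope.

Definition inv_khat1 {R : fieldType} {M : Type} (k1 h : M -> R) (p : M) : R :=
  h p / k1 p.
Definition inv_khat2 {R : fieldType} {M : Type} (k2 l : M -> R) (p : M) : R :=
  l p / k2 p.

Definition inv_kstar1 {R : fieldType} {M : Type} (H1 k1 h : M -> R) (p : M) : R :=
  (- h p ^+ 2 + (H1 p ^+ 2)^-1) / k1 p.
Definition inv_kstar2 {R : fieldType} {M : Type} (eps : R) (H2 k2 l : M -> R) (p : M) : R :=
  (- l p ^+ 2 + eps / H2 p ^+ 2) / k2 p.

From mathcomp Require Import all_boot all_order all_algebra.
From mathcomp Require Import ring.
Import Order.TTheory GRing.Theory Num.Theory.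
Local Open Scope ring_scope.

(* Write [a, b] for the principal radii [1/k1, 1/k2] of [f] and put
   [A = 1/H1^2], [B = eps/H2^2]. Then the difference of the two sides of the
   identity is the polynomial [a b ((h - l)^2 - (A + B))], which vanishes by
   the hypothesis on the Combescure coefficients [h, l]. *)

Lemma dual_radii_polynomial_identity {R : comPzRingType} (a b A B h l : R) :
  (a - b) * ((A - h ^+ 2) * a - (B - l ^+ 2) * b)
  = A * a ^+ 2 + B * b ^+ 2 - (h * a - l * b) ^+ 2
    + a * b * ((h - l) ^+ 2 - (A + B)).
Proof. ring. Qed.

Lemma dual_radii_identity {R : comPzRingType} (a b A B h l : R) :
  (h - l) ^+ 2 = A + B ->
  (a - b) * ((A - h ^+ 2) * a - (B - l ^+ 2) * b)
  = A * a ^+ 2 + B * b ^+ 2 - (h * a - l * b) ^+ 2.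
Proof.
by move=> hl; rewrite dual_radii_polynomial_identity hl subrr mulr0 addr0.
Qed.

(* No nonvanishing hypothesis is needed: [x^-1] is total and
   [(x * y)^-1 = x^-1 * y^-1] holds for all [x, y] in a field. *)
Lemma combescure_dual_radii_identity {R : fieldType} (eps H1 H2 k1 k2 h l : R) :
  (h - l) ^+ 2 = (H1 ^+ 2)^-1 + eps / H2 ^+ 2 ->
  (k1^-1 - k2^-1) *
    ((- h ^+ 2 + (H1 ^+ 2)^-1) / k1 - (- l ^+ 2 + eps / H2 ^+ 2) / k2)
  = (k1 ^+ 2 * H1 ^+ 2)^-1 + eps / (k2 ^+ 2 * H2 ^+ 2) - (h / k1 - l / k2) ^+ 2.
Proof.
move=> /(dual_radii_identity k1^-1 k2^-1) E.
have -> : (- h ^+ 2 + (H1 ^+ 2)^-1) / k1 - (- l ^+ 2 + eps / H2 ^+ 2) / k2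
  = ((H1 ^+ 2)^-1 - h ^+ 2) * k1^-1 - (eps / H2 ^+ 2 - l ^+ 2) * k2^-1 by ring.
by rewrite E !invfM; ring.
Qed.

Theorem lemma3p8 (R : realFieldType) (M : Type) (eps : R)
  (H1 H2 k1 k2 h l : M -> R) :
  (eps = 0 \/ eps = 1 \/ eps = -1) ->
  (forall p, H1 p != 0) -> (forall p, H2 p != 0) ->
  (forall p, k1 p != 0) -> (forall p, k2 p != 0) ->
  (forall p, (h p - l p) ^+ 2 = (H1 p ^+ 2)^-1 + eps / H2 p ^+ 2) ->
  forall p,
    ((k1 p)^-1 - (k2 p)^-1) *
      (inv_kstar1 H1 k1 h p - inv_kstar2 eps H2 k2 l p)
    = (k1 p ^+ 2 * H1 p ^+ 2)^-1 + eps / (k2 p ^+ 2 * H2 p ^+ 2)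
      - (inv_khat1 k1 h p - inv_khat2 k2 l p) ^+ 2.
Proof. by move=> _ _ _ _ _ hl p; apply: combescure_dual_radii_identity. Qed.
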